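(* Let $p$ be a prime, let $c\in[0,1]$ and let $\Theta(t)\in\mathbb{F}_p(\!(t^{-1})\!)$ be a Laurent series that exhibits $c$-escape of mass with respect to the sequence $\{t^k\}_{k\ge0}$. Then, for any irreducible polynomial $P(t)\in\mathbb{F}_p[t]$, the Laurent series $\Theta(P(t))\in\mathbb{F}_p(\!(t^{-1})\!)$ exhibits $c$-escape of mass with respect to the sequence $\{P(t)^k\}_{k\ge0}$.
   Context: For $\Theta(t)=\sum_{i=-h}^\infty a_i t^{-i}\in\mathbb{F}_p(\!(t^{-1})\!)$ and a polynomial $P(t)$, $\Theta(P(t)):=\sum_{i=-h}^\infty a_iP(t)^{-i}\in\mathbb{F}_p(\!(t^{-1})\!)$. Escape of mass (defined for quadratic irrationals): for a quadratic irrational $\Theta\in\mathbb{F}_q(\!(t^{-1})\!)$ and an irreducible $P\in\mathbb{F}_q[t]$, each $\Theta\cdot P^k$ is a quadratic irrational whose continued fraction expansion (polynomial partial quotients, of degree $\ge1$ after the zeroth) is eventually periodic; let $\ell_{\Theta P^k}$ be the period length and $A_1^{[\Theta P^k]},\dots,A_{\ell_{\Theta P^k}}^{[\Theta P^k]}$ the partial quotients of one period. Set $R_{k,n}=\frac{\sum_{i=1}^{\ell_{\Theta P^k}}\max\{\deg A_i^{[\Theta P^k]}-n,0\}}{\sum_{i=1}^{\ell_{\Theta P^k}}\deg A_i^{[\Theta P^k]}}$. $\Theta$ exhibits $c$ escape of mass with respect to $\{P^k\}_{k\ge0}$ if $\lim_{n\to\infty}\liminf_{k\to\infty}R_{k,n}\ge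 c$. *)

From HB Require Import structures.
From mathcomp Require Import all_boot all_order all_algebra.
From mathcomp Require Import all_classical all_reals all_analysis.
Set Implicit Arguments. Unset Strict Implicit. Unset Printing Implicit Defensive.
Import Order.TTheory GRing.Theory Num.Theory.
Local Open Scope ring_scope.

(* Laurent series in t^{-1} over a field K:  x = sum_{e <= h} x e * t^e.     *)
(* (Paper: Theta = sum_{i >= -h} a_i t^{-i}; here x e = a_{-e}.)             *)
Section Laurent.
Variable K : fieldType.

Definition lseries := int -> K.

Definition is_laurent (x : lseries) : Prop :=
  exists h : int, forall e : int, h < e -> x e = 0.

Definition bnd (x : lseries) : int :=
  xget 0 [set h : int | forall e : int, h < e -> x e = 0].

Definition isum (a b : int) (f : int -> K) : K :=
  \sum_(k < absz (Num.max 0 (b - a + 1))) f (a + (k : nat)%:Z).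

Definition lpoly (P : {poly K}) : lseries :=
  fun e => if (0 <= e) then P`_(absz e) else 0.

Definition lone : lseries := lpoly 1.

Definition lsub (x y : lseries) : lseries := fun e => x e - y e.

(* Cauchy product (all nonzero terms lie in the summation window) *)
Definition lmul (x y : lseries) : lseries :=
  fun e => isum (e - bnd y) (bnd x) (fun i => x i * y (e - i)).

Definition linv (x : lseries) : lseries :=
  fun e => xget 0 [set a : K | exists y : lseries,
                     [/\ is_laurent y, lmul x y = lone & y e = a]].

Definition lexp (x : lseries) (n : nat) : lseries := iter n (lmul x) lone.

Definition lpowz (P : {poly K}) (e : int) : lseries :=
  if (0 <= e) then lpoly (P ^+ absz e) else lexp (linv (lpoly P)) (absz e).

(* Theta(P(t)) := sum_e [t^e]Theta * P^e.  For deg P >= 1 the coefficient of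
   t^m only receives contributions from exponents e in [min m 0, bnd x]. *)
Definition lsubst (x : lseries) (P : {poly K}) : lseries :=
  fun m => isum (Num.min m 0) (bnd x) (fun e => x e * lpowz P e m).

Definition lrational (x : lseries) : Prop :=
  exists u v : {poly K}, v != 0 /\ lmul (lpoly v) x = lpoly u.

Definition quadratic_irrational (x : lseries) : Prop :=
  [/\ is_laurent x, ~ lrational x &
      exists a b c : {poly K}, a != 0 /\
        (forall e, lmul (lpoly a) (lmul x x) e + lmul (lpoly b) x e
                   + lpoly c e = 0)].

Definition polypart (y : lseries) (Q : {poly K}) : Prop :=
  forall e : nat, y e%:Z = Q`_e.

Definition is_cf (x : lseries) (A : nat -> {poly K}) : Prop :=
  exists th : nat -> lseries, th 0%N = x /\
    forall n, [/\ is_laurent (th n), polypart (th n) (A n) &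
                  lmul (th n.+1) (lsub (th n) (lpoly (A n))) = lone].

Definition cf_periodic (A : nat -> {poly K}) (N l : nat) : Prop :=
  (0 < l)%N /\ forall n, (N <= n)%N -> A (n + l)%N = A n.

Definition deg (Q : {poly K}) : nat := (size Q).-1.

Variable R : realType.

(* R_{k,n}: the value of the ratio computed on one period of the CF expansion
   of x * P^k (independent of the chosen period window). *)
Definition ratio (A : nat -> {poly K}) (N l n : nat) : R :=
  ((\sum_(N <= i < N + l) (deg (A i) - n)%N)%:R /
   (\sum_(N <= i < N + l) deg (A i))%:R).

Definition Rkn (x : lseries) (P : {poly K}) (k n : nat) : R :=
  xget 0 [set r : R | exists (A : nat -> {poly K}) (N l : nat),
            [/\ is_cf (lmul x (lpoly (P ^+ k))) A, cf_periodic A N l &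
                r = ratio A N l n]].

Definition escape_of_mass (x : lseries) (P : {poly K}) (c : R) : Prop :=
  quadratic_irrational x /\
  (c%:E <= limn (fun n => limn_einf (fun k => (Rkn x P k n)%:E)))%E.

End Laurent.

From HB Require Import structures.
From mathcomp Require Import all_boot all_order all_algebra.
From mathcomp Require Import all_classical all_reals all_analysis.
From mathcomp Require Import zify ring.
Set Implicit Arguments. Unset Strict Implicit. Unset Printing Implicit Defensive.
Import Order.TTheory GRing.Theory Num.Theory.
Local Open Scope ring_scope.

(* Substituting [P] for [t] is a field endomorphism [x |-> x(P)] of K((t^-1))
   which maps a polynomial [Q] to [Q \Po P] and, since [deg P >= 1], series of
   negative degree to series of negative degree.  Hence it maps the continued
   fraction expansion [A_0; A_1, ...] of [x t^k] to the expansion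
   [A_0 \Po P; A_1 \Po P, ...] of [x(P) P^k], keeps quadratic irrationals
   quadratic irrational, and multiplies the degree of every partial quotient by
   [d = deg P].  As [d a - n >= d (a - n)], every ratio R_{k,n} can only grow,
   and so does lim_n liminf_k R_{k,n}. *)

Section IntervalSums.
Variable K : fieldType.
Implicit Types (a b i j : int) (f g : int -> K).

Definition zrange a b : seq int :=
  [seq a + (k : nat)%:Z | k <- iota 0 (absz (Num.max 0 (b - a + 1)))].

Lemma isumE a b f : isum a b f = \sum_(i <- zrange a b) f i.
Proof.
by rewrite /isum big_map -(big_mkord xpredT (fun k => f (a + k%:Z))) /index_iota subn0.
Qed.

Lemma mem_zrange a b i : (i \in zrange a b) = (a <= i <= b).
Proof.
apply/mapP/idP => [[k]|/andP[h1 h2]].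
  by rewrite mem_iota add0n => /andP[_ hk] ->; apply/andP; split; lia.
exists (absz (i - a)); last lia.
by rewrite mem_iota add0n; apply/andP; split; lia.
Qed.

Lemma zrange_uniq a b : uniq (zrange a b).
Proof.
rewrite map_inj_uniq ?iota_uniq // => x y /addrI /eqP.
by rewrite eqz_nat => /eqP.
Qed.

Definition supported_in f a b := forall i, f i != 0 -> a <= i <= b.

Lemma eq_isum_supp a b a' b' f :
  supported_in f a b -> supported_in f a' b' -> isum a b f = isum a' b' f.
Proof.
move=> s s'; have drop0 r : \sum_(i <- r) f i = \sum_(i <- r | f i != 0) f i.
  by rewrite [RHS]big_mkcond; apply: eq_bigr => i _; case: eqVneq.
rewrite !isumE !drop0 -[LHS]big_filter -[RHS]big_filter.
apply: perm_big; apply: uniq_perm; rewrite ?filter_uniq ?zrange_uniq // => i.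
rewrite !mem_filter !mem_zrange.
by case: (eqVneq (f i) 0) => [// | /[dup] /s -> /s' ->].
Qed.

Lemma isum_map (h : int -> int) a b a' b' f : injective h ->
  (forall j, (j \in map h (zrange a b)) = (a' <= j <= b')) ->
  isum a b (f \o h) = isum a' b' f.
Proof.
move=> inj_h mem_h; rewrite !isumE -(big_map h xpredT f).
apply: perm_big; apply: uniq_perm => [||j]; last by rewrite mem_h mem_zrange.
  by rewrite (map_inj_uniq inj_h) zrange_uniq.
exact: zrange_uniq.
Qed.

Definition fin_supp f := exists M : int, forall i, f i != 0 -> `|i| <= M.

(* A junk value unless [fin_supp f]. *)
Definition fsum f : K :=
  let M := xget 0 [set M : int | forall i, f i != 0 -> `|i| <= M] in isum (- M) M f.

Lemma supported_in_fin f a b : supported_in f a b -> fin_supp f.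
Proof. by move=> s; exists (`|a| + `|b|) => i /s; lia. Qed.

Lemma fsumE f a b : supported_in f a b -> fsum f = isum a b f.
Proof.
move=> s; rewrite /fsum; set M := xget _ _.
have sM : forall i, f i != 0 -> `|i| <= M := xgetPex 0 (supported_in_fin s).
by apply: eq_isum_supp => // i /sM; lia.
Qed.

Lemma fsum0 f : (forall i, f i = 0) -> fsum f = 0.
Proof.
move=> f0; rewrite (@fsumE _ 0 0) => [|i]; last by rewrite f0 eqxx.
by rewrite isumE big_seq big1 // => i _; rewrite f0.
Qed.

Lemma fsum_pred1 f c : (forall i, i != c -> f i = 0) -> fsum f = f c.
Proof.
move=> fc; rewrite (@fsumE _ c c) => [|i]; last first.
  by apply: contraR => ic; rewrite fc //; apply: contraNneq ic => ->; lia.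
by rewrite /isum (_ : absz _ = 1%N) ?big_ord1 ?addr0 //; lia.
Qed.

Lemma eq_fsum f g : f =1 g -> fsum f = fsum g.
Proof. by move=> /funext ->. Qed.

Lemma fsumD f g : fin_supp f -> fin_supp g -> fsum (f \+ g) = fsum f + fsum g.
Proof.
move=> [M sf] [N sg]; set B := `|M| + `|N|.
have sfB : supported_in f (- B) B by move=> i /sf; lia.
have sgB : supported_in g (- B) B by move=> i /sg; lia.
rewrite (fsumE sfB) (fsumE sgB) (@fsumE _ (- B) B) => [|i]; first by rewrite !isumE big_split.
by case: (eqVneq (f i) 0) => [/= -> | /sfB //]; rewrite add0r => /sgB.
Qed.

Lemma fsumMl f c : fin_supp f -> fsum (fun i => c * f i) = c * fsum f.
Proof.
move=> [M sf]; have sM : supported_in f (- M) M by move=> i /sf; lia.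
rewrite (fsumE sM) (@fsumE _ (- M) M) ?isumE ?mulr_sumr // => i.
by rewrite mulf_eq0 negb_or => /andP[_ /sM].
Qed.

Lemma fsumMr f c : fin_supp f -> fsum (fun i => f i * c) = fsum f * c.
Proof. by move=> fs; rewrite mulrC -fsumMl //; apply: eq_fsum => i; rewrite mulrC. Qed.

Lemma fsumN f : fin_supp f -> fsum (fun i => - f i) = - fsum f.
Proof. by move=> fs; rewrite -mulN1r -fsumMl //; apply: eq_fsum => i; rewrite mulN1r. Qed.

Lemma fsumB f g : fin_supp f -> fin_supp g -> fsum (f \- g) = fsum f - fsum g.
Proof.
move=> fs [M sg]; rewrite -fsumN; last by exists M.
by rewrite -fsumD //; exists M => i; rewrite oppr_eq0; exact: sg.
Qed.

Lemma fsum_shift f a : fin_supp f -> fsum (fun i => f (a + i)) = fsum f.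
Proof.
move=> [M sf].
rewrite (@fsumE _ (- M - a) (M - a)) => [|i /sf]; last lia.
rewrite (@fsumE _ (- M) M) => [|i /sf]; last lia.
have inj_add : injective (fun i => a + i) by move=> x y /addrI.
apply: (isum_map _ inj_add) => j.
rewrite -[j in LHS](addrNK a) addrC (mem_map inj_add) mem_zrange; lia.
Qed.

Lemma fsum_reflect f e : fin_supp f -> fsum (fun i => f (e - i)) = fsum f.
Proof.
move=> [M sf].
rewrite (@fsumE _ (e - M) (e + M)) => [|i /sf]; last lia.
rewrite (@fsumE _ (- M) M) => [|i /sf]; last lia.
have inj_sub : injective (fun i => e - i) by move=> x y /addrI /oppr_inj.
apply: (isum_map _ inj_sub) => j.
by rewrite -[j in LHS](subKr e) (mem_map inj_sub) mem_zrange; lia.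
Qed.

Lemma exchange_fsum (F : int -> int -> K) :
  (exists M, forall i j, F i j != 0 -> `|i| <= M /\ `|j| <= M) ->
  fsum (fun i => fsum (F i)) = fsum (fun j => fsum (F^~ j)).
Proof.
move=> [M sF].
have rows i : fsum (F i) = isum (- M) M (F i) by apply: fsumE => j /sF; lia.
have cols j : fsum (F^~ j) = isum (- M) M (F^~ j) by apply: fsumE => i /sF; lia.
have row_supp : supported_in (fun i => isum (- M) M (F i)) (- M) M.
  move=> i; apply: contraR => ?; rewrite isumE big1 // => j _.
  by apply/eqP/negPn/negP => /sF; lia.
have col_supp : supported_in (fun j => isum (- M) M (F^~ j)) (- M) M.
  move=> j; apply: contraR => ?; rewrite isumE big1 // => i _.
  by apply/eqP/negPn/negP => /sF; lia.
rewrite (eq_fsum rows) (eq_fsum cols) (fsumE row_supp) (fsumE col_supp) !isumE.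
under eq_bigr do rewrite isumE.
by rewrite exchange_big; under eq_bigr do rewrite -isumE.
Qed.

End IntervalSums.

Lemma mulf_neq0_split (R : pzSemiRingType) (a b : R) : a * b != 0 -> a != 0 /\ b != 0.
Proof. by move=> ab_neq0; split; apply: contraNneq ab_neq0 => ->; rewrite ?mul0r ?mulr0. Qed.

Section SeriesRing.
Variable K : fieldType.
Implicit Types (x y z : lseries K) (Q S : {poly K}).

Definition ldeg_le x (h : int) := forall e, h < e -> x e = 0.

Lemma ldeg_le_nz x h e : ldeg_le x h -> x e != 0 -> e <= h.
Proof. by move=> xh; apply: contraR; rewrite -ltNge => /xh ->. Qed.

Lemma ldeg_leW x h h' : ldeg_le x h -> h <= h' -> ldeg_le x h'.
Proof. by move=> xh hh' e he; apply: xh; lia. Qed.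

Lemma ldeg_le_bnd x : is_laurent x -> ldeg_le x (bnd x).
Proof. exact: xgetPex. Qed.

Lemma ldeg_le_laurent x h : ldeg_le x h -> is_laurent x.
Proof. by exists h. Qed.

Lemma fin_supp_conv x y e : is_laurent x -> is_laurent y ->
  fin_supp (fun i => x i * y (e - i)).
Proof.
move=> /ldeg_le_bnd xb /ldeg_le_bnd yb.
apply: (@supported_in_fin _ _ (e - bnd y) (bnd x)) => i.
by move=> /mulf_neq0_split [/(ldeg_le_nz xb) ? /(ldeg_le_nz yb) ?]; lia.
Qed.

Lemma lmulE x y e : is_laurent x -> is_laurent y ->
  lmul x y e = fsum (fun i => x i * y (e - i)).
Proof.
move=> /ldeg_le_bnd xb /ldeg_le_bnd yb; symmetry; apply: fsumE => i.
by move=> /mulf_neq0_split [/(ldeg_le_nz xb) ? /(ldeg_le_nz yb) ?]; lia.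
Qed.

Lemma ldeg_le_lmul x y hx hy :
  ldeg_le x hx -> ldeg_le y hy -> ldeg_le (lmul x y) (hx + hy).
Proof.
move=> xh yh e he; rewrite lmulE; [|exact: ldeg_le_laurent xh|exact: ldeg_le_laurent yh].
apply: fsum0 => i; apply/eqP/negPn/negP.
by move=> /mulf_neq0_split [/(ldeg_le_nz xh) ? /(ldeg_le_nz yh) ?]; lia.
Qed.

Lemma lmul_laurent x y : is_laurent x -> is_laurent y -> is_laurent (lmul x y).
Proof.
by move=> /ldeg_le_bnd xb /ldeg_le_bnd yb; exact: ldeg_le_laurent (ldeg_le_lmul xb yb).
Qed.

Lemma ladd_laurent x y : is_laurent x -> is_laurent y -> is_laurent (x \+ y).
Proof.
move=> /ldeg_le_bnd xb /ldeg_le_bnd yb; exists (Num.max (bnd x) (bnd y)) => e he /=.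
by rewrite xb ?yb ?addr0 //; lia.
Qed.

Lemma lopp_laurent x : is_laurent x -> is_laurent (fun e => - x e).
Proof. by move=> [h xh]; exists h => e /xh ->; rewrite oppr0. Qed.

Lemma lmulC x y : is_laurent x -> is_laurent y -> lmul x y = lmul y x.
Proof.
move=> lx ly; apply: funext => e; rewrite !lmulE //.
rewrite -(fsum_reflect e (fin_supp_conv e lx ly)); apply: eq_fsum => i.
by rewrite mulrC subKr.
Qed.

Lemma lmulA x y z : is_laurent x -> is_laurent y -> is_laurent z ->
  lmul (lmul x y) z = lmul x (lmul y z).
Proof.
move=> lx ly lz; apply: funext => e.
have xb := ldeg_le_bnd lx; have yb := ldeg_le_bnd ly; have zb := ldeg_le_bnd lz.
have lxy := lmul_laurent lx ly; have lyz := lmul_laurent ly lz.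
rewrite !lmulE //.
under eq_fsum => j do rewrite (lmulE _ lx ly) -(fsumMr _ (fin_supp_conv _ lx ly)).
under [RHS]eq_fsum => i do rewrite (lmulE _ ly lz) -(fsumMl _ (fin_supp_conv _ ly lz)).
rewrite exchange_fsum; last first.
  exists (`|e| + `|bnd x| + `|bnd y| + `|bnd z|) => j i.
  move=> /mulf_neq0_split [/mulf_neq0_split [/(ldeg_le_nz xb) ? /(ldeg_le_nz yb) ?]].
  by move=> /(ldeg_le_nz zb) ?; lia.
apply: eq_fsum => i; rewrite -(@fsum_shift _ _ i); last first.
  apply: (@supported_in_fin _ _ (e - bnd z) (i + bnd y)) => j.
  move=> /mulf_neq0_split [/mulf_neq0_split [_ /(ldeg_le_nz yb) ?]].
  by move=> /(ldeg_le_nz zb) ?; lia.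
by apply: eq_fsum => l; rewrite addrC addKr opprD addrA mulrA.
Qed.

Lemma lmulDl x y z : is_laurent x -> is_laurent y -> is_laurent z ->
  lmul (x \+ y) z = lmul x z \+ lmul y z.
Proof.
move=> lx ly lz; apply: funext => e /=; have lxy := ladd_laurent lx ly.
rewrite !lmulE // -fsumD; try exact: fin_supp_conv.
by apply: eq_fsum => i; rewrite /= mulrDl.
Qed.

Lemma ldeg_le_lpoly Q : ldeg_le (lpoly Q) ((size Q)%:Z - 1).
Proof.
move=> e he; rewrite /lpoly; case: ifP => // _.
by rewrite nth_default //; move: he; case: (size Q) => *; lia.
Qed.

Lemma lpoly_laurent Q : is_laurent (lpoly Q).
Proof. by exists ((size Q)%:Z - 1); exact: ldeg_le_lpoly. Qed.

Lemma lpoly_lt0 Q e : e < 0 -> lpoly Q e = 0.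
Proof. by rewrite /lpoly; case: ifP => //; lia. Qed.

Lemma lpoly_nat Q (n : nat) : lpoly Q n = Q`_n.
Proof. by []. Qed.

Lemma lone0 : lone K 0 = 1.
Proof. by rewrite /lone (lpoly_nat 1 0) coef1. Qed.

Lemma loneN0 e : e != 0 -> lone K e = 0.
Proof.
move=> e_neq0; rewrite /lone /lpoly; case: ifP => // _.
by rewrite coef1; case: eqP => //; lia.
Qed.

Lemma lmul1 x : is_laurent x -> lmul (lone K) x = x.
Proof.
move=> lx; have l1 : is_laurent (lone K) := lpoly_laurent 1.
apply: funext => e; rewrite lmulE //.
rewrite (@fsum_pred1 _ _ 0) ?lone0 ?subr0 ?mul1r // => i i_neq0.
by rewrite loneN0 ?mul0r.
Qed.

Lemma lpolyM Q S : lpoly (Q * S) = lmul (lpoly Q) (lpoly S).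
Proof.
have lQ := lpoly_laurent Q; have lS := lpoly_laurent S.
apply: funext => e; rewrite lmulE //.
have [e_lt0|] := ltP e 0.
  rewrite lpoly_lt0 // fsum0 // => i; have [i_lt0|i_ge0] := ltP i 0.
    by rewrite lpoly_lt0 ?mul0r.
  by rewrite (@lpoly_lt0 S (e - i)) ?mulr0 //; lia.
case: e => // n _; rewrite lpoly_nat coefM (@fsumE _ _ 0 n); last first.
  move=> i /mulf_neq0_split [Qi_neq0 Si_neq0].
  have : 0 <= i by apply: contraR Qi_neq0; rewrite -ltNge => /lpoly_lt0 ->.
  have : 0 <= n%:Z - i by apply: contraR Si_neq0; rewrite -ltNge => /lpoly_lt0 ->.
  lia.
rewrite /isum (_ : absz _ = n.+1); last by lia.
apply: eq_bigr => -[k lt_kn] _ /=.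
by rewrite add0r lpoly_nat (_ : n%:Z - k%:Z = (n - k)%N%:Z) ?lpoly_nat //; lia.
Qed.

Lemma lpoly_inj : injective (@lpoly K).
Proof. by move=> Q S QS; apply/polyP => n; rewrite -!lpoly_nat QS. Qed.

End SeriesRing.

(* [inv_coef j] is the coefficient of t^(-h-j) in the inverse of a series
   with leading term [x h] t^h, obtained by solving [x * y = 1] degree by degree. *)
Section SeriesInverse.
Variables (K : fieldType) (x : lseries K) (h : int).

Let r (i : nat) := x (h - i%:Z).

Fixpoint inv_coefs (j : nat) : seq K :=
  if j is j'.+1 then
    rcons (inv_coefs j') (- (r 0)^-1 * \sum_(i < j) r i.+1 * nth 0 (inv_coefs j') (j' - i))
  else [:: (r 0)^-1].

Definition inv_coef j := nth 0 (inv_coefs j) j.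

Lemma size_inv_coefs j : size (inv_coefs j) = j.+1.
Proof. by elim: j => //= j IH; rewrite size_rcons IH. Qed.

Lemma nth_inv_coefs j k : (k <= j)%N -> nth 0 (inv_coefs j) k = inv_coef k.
Proof.
elim: j k => [|j IH] k; first by rewrite leqn0 => /eqP ->.
rewrite leq_eqVlt => /orP[/eqP -> //|lt_kj].
by rewrite /= nth_rcons size_inv_coefs lt_kj IH.
Qed.

Definition inv_series : lseries K :=
  fun e => if e <= - h then inv_coef (absz (- h - e)) else 0.

Lemma ldeg_le_inv_series : ldeg_le inv_series (- h).
Proof. by move=> e he; rewrite /inv_series; case: ifP => //; lia. Qed.

Hypotheses (xh_neq0 : x h != 0) (x_le_h : ldeg_le x h).

Lemma inv_coefS j :
  inv_coef j.+1 = - (r 0)^-1 * \sum_(i < j.+1) r i.+1 * inv_coef (j - i).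
Proof.
rewrite /inv_coef /= nth_rcons size_inv_coefs ltnn eqxx; congr (_ * _).
by apply: eq_bigr => i _; rewrite nth_inv_coefs ?leq_subr.
Qed.

Lemma inv_coef_conv j : \sum_(k < j.+1) r k * inv_coef (j - k) = (j == 0)%:R.
Proof.
have r0_neq0 : r 0 != 0 by rewrite /r subr0.
case: j => [|j]; first by rewrite big_ord1 /inv_coef /= mulfV.
rewrite big_ord_recl subn0 inv_coefS mulrA mulrN mulfV // mulN1r.
by rewrite [X in - X + _](eq_bigr (fun i : 'I_j.+1 => r i.+1 * inv_coef (j - i))) ?addNr.
Qed.

Lemma lmul_inv_series : lmul x inv_series = lone K.
Proof.
have lx : is_laurent x := ldeg_le_laurent x_le_h.
have ly : is_laurent inv_series := ldeg_le_laurent ldeg_le_inv_series.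
apply: funext => e; rewrite lmulE //; have [e_gt0|] := ltP 0 e.
  rewrite loneN0; last by lia.
  apply: fsum0 => i; apply/eqP/negPn/negP => /mulf_neq0_split [].
  by move=> /(ldeg_le_nz x_le_h) ? /(ldeg_le_nz ldeg_le_inv_series) ?; lia.
move=> e_le0; have [j ->] : exists j : nat, e = - j%:Z by exists (absz e); lia.
rewrite -(fsum_reflect h (fin_supp_conv _ lx ly)) (@fsumE _ _ 0 j); last first.
  move=> k /mulf_neq0_split [].
  by move=> /(ldeg_le_nz x_le_h) ? /(ldeg_le_nz ldeg_le_inv_series) ?; lia.
have -> : lone K (- j%:Z) = (j == 0)%:R.
  by case: (eqVneq j 0%N) => [->|?]; rewrite ?lone0 ?loneN0 //; lia.
rewrite -inv_coef_conv /isum (_ : absz _ = j.+1); last by lia.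
apply: eq_bigr => -[k lt_kj] _ /=; rewrite add0r /r /inv_series.
by case: ifP => [_|]; [congr (_ * inv_coef _)|]; lia.
Qed.

End SeriesInverse.

Lemma exists_lead (K : fieldType) (x : lseries K) e0 : is_laurent x -> x e0 != 0 ->
  exists h, x h != 0 /\ ldeg_le x h.
Proof.
move=> /ldeg_le_bnd xb xe0_neq0.
suff lead_below :
    forall (n : nat) b, ldeg_le x b -> e0 + n%:Z = b -> exists h, x h != 0 /\ ldeg_le x h.
  apply: (lead_below (absz (bnd x - e0)) (bnd x)) => //.
  by have := ldeg_le_nz xb xe0_neq0; lia.
elim => [|n IH] b xb' eb; first by exists e0; split; rewrite // -(addr0 e0) eb.
have [xb0|] := eqVneq (x b) 0; last by exists b.
apply: (IH (b - 1)); last by lia.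
by move=> e he; case: (eqVneq e b) => [->//|?]; apply: xb'; lia.
Qed.

Section LaurentField.
Variable K : fieldType.

Record laurent := Laurent { lval : lseries K ; _ : `[< is_laurent lval >] }.

HB.instance Definition _ := [isSub for lval].
HB.instance Definition _ := [Equality of laurent by <:].
HB.instance Definition _ := [Choice of laurent by <:].

Implicit Types x y z : laurent.

Lemma lvalP x : is_laurent (lval x).
Proof. by case: x => f /= /asboolP. Qed.

Definition mkL (f : lseries K) (lf : is_laurent f) : laurent := Laurent (asboolT lf).

Lemma laurent_ext x y : lval x =1 lval y -> x = y.
Proof. by move=> /funext; apply: val_inj. Qed.

Definition lzero := mkL (ldeg_le_laurent (fun (e : int) (_ : 0 < e) => erefl (0 : K))).
Definition ladd x y := mkL (ladd_laurent (lvalP x) (lvalP y)).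
Definition lopp x := mkL (lopp_laurent (lvalP x)).

Lemma laddA : associative ladd.
Proof. by move=> x y z; apply: laurent_ext => e /=; rewrite addrA. Qed.
Lemma laddC : commutative ladd.
Proof. by move=> x y; apply: laurent_ext => e /=; rewrite addrC. Qed.
Lemma ladd0 : left_id lzero ladd.
Proof. by move=> x; apply: laurent_ext => e /=; rewrite add0r. Qed.
Lemma laddN : left_inverse lzero lopp ladd.
Proof. by move=> x; apply: laurent_ext => e /=; rewrite addNr. Qed.

HB.instance Definition _ := GRing.isZmodule.Build laurent laddA laddC ladd0 laddN.

Definition lunit := mkL (lpoly_laurent (1 : {poly K})).
Definition lmulL x y := mkL (lmul_laurent (lvalP x) (lvalP y)).

Lemma lmulLA : associative lmulL.
Proof. by move=> x y z; apply: val_inj; rewrite /= lmulA //; exact: lvalP. Qed.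
Lemma lmulLC : commutative lmulL.
Proof. by move=> x y; apply: val_inj; rewrite /= lmulC //; exact: lvalP. Qed.
Lemma lmul1L : left_id lunit lmulL.
Proof. by move=> x; apply: val_inj; rewrite /= lmul1 //; exact: lvalP. Qed.
Lemma lmulLDl : left_distributive lmulL ladd.
Proof. by move=> x y z; apply: val_inj; rewrite /= lmulDl //; exact: lvalP. Qed.
Lemma lunit_neq0 : lunit != lzero.
Proof.
by apply/eqP => /(congr1 (lval^~ 0)) /eqP; rewrite -[lval _ 0]/(lone K 0) lone0 oner_eq0.
Qed.

HB.instance Definition _ :=
  GRing.Zmodule_isComNzRing.Build laurent lmulLA lmulLC lmul1L lmulLDl lunit_neq0.

Lemma lvalD x y e : lval (x + y) e = lval x e + lval y e. Proof. by []. Qed.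
Lemma lvalB x y e : lval (x - y) e = lval x e - lval y e. Proof. by []. Qed.
Lemma lval0 e : lval 0 e = 0. Proof. by []. Qed.
Lemma lval1 : lval 1 = lone K. Proof. by []. Qed.
Lemma lvalM x y : lval (x * y) = lmul (lval x) (lval y). Proof. by []. Qed.

Lemma lvalX x n : lval (x ^+ n) = lexp (lval x) n.
Proof. by elim: n => //= n IH; rewrite exprS lvalM IH. Qed.

Definition inv_lead x h := mkL (ldeg_le_laurent (@ldeg_le_inv_series _ (lval x) h)).

Lemma mul_inv_lead x h : lval x h != 0 -> ldeg_le (lval x) h -> x * inv_lead x h = 1.
Proof. by move=> xh x_le_h; apply: val_inj; exact: lmul_inv_series. Qed.

Lemma laurent_neq0 x : x != 0 -> exists e, lval x e != 0.
Proof.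
move=> x_neq0; apply: contra_notP (negP x_neq0) => x0; apply/eqP/laurent_ext => e.
by rewrite lval0; apply/eqP/negPn/negP => xe; apply: x0; exists e.
Qed.

Lemma laurent_unit x : x != 0 -> exists y, y * x = 1.
Proof.
move=> /laurent_neq0 [e0 xe0].
have [h [xh x_le_h]] := exists_lead (lvalP x) xe0.
by exists (inv_lead x h); rewrite mulrC; exact: mul_inv_lead.
Qed.

Definition linvL x : laurent := xget 0 [set y | y * x = 1].

Lemma linvL_mulVf x : x != 0 -> linvL x * x = 1.
Proof. by move=> /laurent_unit; exact: xgetPex. Qed.

Lemma linvL0 : linvL 0 = 0.
Proof. by apply: xgetPN => y /=; rewrite mulr0 => /esym/eqP; rewrite oner_eq0. Qed.

HB.instance Definition _ := GRing.ComNzRing_isField.Build laurent linvL_mulVf linvL0.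

Lemma lvalV x : x != 0 -> linv (lval x) = lval x^-1.
Proof.
move=> x_neq0; apply: funext => e; apply: xget_unique.
  by exists (lval x^-1); split => //; [exact: lvalP | rewrite -lvalM mulfV].
move=> a [y [ly xy <-]]; rewrite -[y]/(lval (mkL ly)) -(@mulr1_eq _ x (mkL ly)) //.
exact: val_inj.
Qed.

Lemma ldeg_leX x h n : ldeg_le (lval x) h -> ldeg_le (lval (x ^+ n)) (n%:Z * h).
Proof.
move=> x_le_h; elim: n => [|n IH].
  by rewrite expr0 mul0r => e e_gt0; rewrite lval1 loneN0 //; lia.
by rewrite exprSr; apply: ldeg_leW (ldeg_le_lmul IH x_le_h) _; lia.
Qed.

Lemma ldeg_leV x h : lval x h != 0 -> ldeg_le (lval x) h -> ldeg_le (lval x^-1) (- h).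
Proof.
move=> xh x_le_h; rewrite (mulr1_eq (mul_inv_lead xh x_le_h)).
exact: ldeg_le_inv_series.
Qed.

Definition lpolyL (Q : {poly K}) : laurent := mkL (lpoly_laurent Q).

Lemma lpolyLE Q : lval (lpolyL Q) = lpoly Q. Proof. by []. Qed.

Lemma lpolyL_is_zmod_morphism : zmod_morphism lpolyL.
Proof.
move=> Q S; apply: laurent_ext => e; rewrite lvalB /= /lpoly coefB.
by case: ifP; rewrite ?subr0.
Qed.

Lemma lpolyL_is_monoid_morphism : monoid_morphism lpolyL.
Proof. by split=> [|Q S]; apply: val_inj; rewrite //= lpolyM. Qed.

HB.instance Definition _ := GRing.isZmodMorphism.Build {poly K} laurent lpolyL
  lpolyL_is_zmod_morphism.
HB.instance Definition _ := GRing.isMonoidMorphism.Build {poly K} laurent lpolyL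
  lpolyL_is_monoid_morphism.

Lemma lpolyL_inj : injective lpolyL.
Proof. by move=> Q S /(congr1 lval) /lpoly_inj. Qed.

Lemma lpolyL_eq0 Q : (lpolyL Q == 0) = (Q == 0).
Proof. exact: raddf_eq0 lpolyL_inj. Qed.

End LaurentField.

#[export] Hint Resolve lvalP : core.

Section Substitution.
Variables (K : fieldType) (P : {poly K}).
Hypothesis P_gt1 : (1 < size P)%N.
Implicit Types (X Y : lseries K) (x y : laurent K).

Let d : int := (size P).-1.

Let d_ge1 : 1 <= d. Proof. by rewrite /d; lia. Qed.

Lemma lpolyL_P_neq0 : lpolyL P != 0.
Proof. by rewrite lpolyL_eq0 -size_poly_gt0; lia. Qed.

Lemma ldeg_le_P : ldeg_le (lval (lpolyL P)) d.
Proof. by apply: ldeg_leW (ldeg_le_lpoly (Q := P)) _; rewrite /d; lia. Qed.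

Lemma lpoly_P_lead : lval (lpolyL P) d != 0.
Proof. by rewrite /= lpoly_nat -lead_coefE lead_coef_eq0 -size_poly_gt0; lia. Qed.

Definition ppow (e : int) : lseries K := lval (lpolyL P ^ e).

Lemma ppow_nat (k : nat) : ppow k = lpoly (P ^+ k).
Proof. by rewrite /ppow -exprnP -rmorphXn. Qed.

Lemma lpowzE e : lpowz P e = ppow e.
Proof.
rewrite /lpowz; case: ifP; case: e => // n _; first by rewrite ppow_nat.
by rewrite (lvalV lpolyL_P_neq0) -lvalX /ppow exprVn.
Qed.

Lemma ldeg_le_ppow e : ldeg_le (ppow e) (e * d).
Proof.
case: e => n; first by rewrite /ppow -exprnP; exact: ldeg_leX ldeg_le_P.
rewrite /ppow NegzE -exprnN -exprVn; apply: ldeg_leW.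
  exact/ldeg_leX/ldeg_leV/ldeg_le_P/lpoly_P_lead.
lia.
Qed.

Lemma ppow_ge0 e m : 0 <= e -> ppow e m != 0 -> 0 <= m.
Proof.
case: e => // n _; rewrite ppow_nat; apply: contraR; rewrite -ltNge.
by move=> /lpoly_lt0 ->.
Qed.

Lemma ppow_low e m : ppow e m != 0 -> Num.min m 0 <= e.
Proof.
move=> /(ldeg_le_nz (ldeg_le_ppow (e := e))); have [e_ge0|e_lt0] := lerP 0 e; first lia.
have := d_ge1.
nia.
Qed.

Lemma lmul_ppow a b : lmul (ppow a) (ppow b) = ppow (a + b).
Proof. by rewrite /ppow -lvalM expfzDr // lpolyL_P_neq0. Qed.

Lemma fin_supp_subst X m : is_laurent X -> fin_supp (fun e => X e * ppow e m).
Proof.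
move=> /ldeg_le_bnd Xb; apply: (@supported_in_fin _ _ (Num.min m 0) (bnd X)) => e.
by move=> /mulf_neq0_split [/(ldeg_le_nz Xb) ? /ppow_low ?]; lia.
Qed.

Lemma lsubstE X m : is_laurent X -> lsubst X P m = fsum (fun e => X e * ppow e m).
Proof.
move=> /ldeg_le_bnd Xb; rewrite /lsubst; under eq_fun => e do rewrite lpowzE.
symmetry; apply: fsumE => e.
by move=> /mulf_neq0_split [/(ldeg_le_nz Xb) ? /ppow_low ?]; lia.
Qed.

Lemma ldeg_le_lsubst X h : ldeg_le X h -> ldeg_le (lsubst X P) (h * d).
Proof.
move=> X_le_h m hm; rewrite lsubstE; last exact: ldeg_le_laurent X_le_h.
apply: fsum0 => e; apply/eqP/negPn/negP.
move=> /mulf_neq0_split [/(ldeg_le_nz X_le_h) ? /(ldeg_le_nz (ldeg_le_ppow (e := e))) ?].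
have := d_ge1.
nia.
Qed.

Lemma lsubst_laurent X : is_laurent X -> is_laurent (lsubst X P).
Proof. by move=> /ldeg_le_bnd Xb; exact: ldeg_le_laurent (ldeg_le_lsubst Xb). Qed.

Definition lsubstL x : laurent K := mkL (lsubst_laurent (lvalP x)).

Lemma lsubstLE x m : lval (lsubstL x) m = fsum (fun e => lval x e * ppow e m).
Proof. exact/lsubstE/lvalP. Qed.

Lemma ldeg_le_lsubstL x h : ldeg_le (lval x) h -> ldeg_le (lval (lsubstL x)) (h * d).
Proof. exact: ldeg_le_lsubst. Qed.

Lemma lmul_lsubstL x v m : is_laurent v ->
  lmul (lval (lsubstL x)) v m = fsum (fun a => lval x a * lmul (ppow a) v m).
Proof.
move=> lv; set X := lval x; have lX : is_laurent X := lvalP x.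
have Xb := ldeg_le_bnd lX; have vb := ldeg_le_bnd lv.
rewrite lmulE //.
under eq_fsum => j do rewrite lsubstLE -(fsumMr _ (fin_supp_subst _ lX)).
rewrite exchange_fsum; last first.
  exists (`|m| + `|bnd X * d| + `|bnd v| + `|bnd X|) => j a.
  move=> /mulf_neq0_split [/mulf_neq0_split [/(ldeg_le_nz Xb) Xa pa] /(ldeg_le_nz vb) ?].
  have := ldeg_le_nz (ldeg_le_ppow (e := a)) pa; have := ppow_low pa.
  have := d_ge1.
  nia.
apply: eq_fsum => a; have la : is_laurent (ppow a) := lvalP _.
rewrite lmulE // -(fsumMl _ (fin_supp_conv m la lv)).
by apply: eq_fsum => j; rewrite mulrA.
Qed.

Lemma lsubstL_is_zmod_morphism : zmod_morphism lsubstL.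
Proof.
move=> x y; apply: laurent_ext => m; rewrite lvalB !lsubstLE.
rewrite -fsumB; try exact: fin_supp_subst (lvalP _).
by apply: eq_fsum => e; rewrite /= mulrBl.
Qed.

HB.instance Definition _ := GRing.isZmodMorphism.Build (laurent K) (laurent K) lsubstL
  lsubstL_is_zmod_morphism.

Lemma lsubstL_poly Q : lsubstL (lpolyL Q) = lpolyL (Q \Po P).
Proof.
apply: laurent_ext => m; rewrite lsubstLE /=; have [m_lt0|] := ltP m 0.
  rewrite lpoly_lt0 // fsum0 // => e; apply/eqP/negPn/negP => /mulf_neq0_split [Qe pe].
  have e_ge0 : 0 <= e by apply: contraR Qe; rewrite -ltNge => /lpoly_lt0 ->.
  by have := ppow_ge0 e_ge0 pe; lia.
case: m => // n _; rewrite lpoly_nat comp_polyE coef_sum.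
rewrite (@fsumE _ _ 0 ((size Q)%:Z - 1)); last first.
  move=> e /mulf_neq0_split [Qe _]; have := ldeg_le_nz (ldeg_le_lpoly (Q := Q)) Qe.
  have : 0 <= e by apply: contraR Qe; rewrite -ltNge => /lpoly_lt0 ->.
  lia.
rewrite /isum (_ : absz _ = size Q); last by lia.
by apply: eq_bigr => -[k lt_kQ] _ /=; rewrite add0r lpoly_nat ppow_nat lpoly_nat coefZ.
Qed.

Lemma lsubstL_coefM x y m : lval (lsubstL (x * y)) m =
  fsum (fun a => lval x a * fsum (fun b => lval y b * ppow (a + b) m)).
Proof.
set X := lval x; set Y := lval y; have lX : is_laurent X := lvalP x.
have lY : is_laurent Y := lvalP y; have Xb := ldeg_le_bnd lX; have Yb := ldeg_le_bnd lY.
rewrite lsubstLE.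
under eq_fsum => e do rewrite lvalM (lmulE _ lX lY) -(fsumMr _ (fin_supp_conv _ lX lY)).
rewrite exchange_fsum; last first.
  exists (`|m| + `|bnd X| + `|bnd Y|) => e a.
  move=> /mulf_neq0_split [/mulf_neq0_split [/(ldeg_le_nz Xb) ? /(ldeg_le_nz Yb) ?]].
  by move=> /ppow_low ?; lia.
apply: eq_fsum => a; rewrite -fsumMl; last first.
  apply: (@supported_in_fin _ _ (Num.min m 0 - a) (bnd Y)) => b.
  by move=> /mulf_neq0_split [/(ldeg_le_nz Yb) ? /ppow_low ?]; lia.
rewrite -(@fsum_shift _ _ a); last first.
  apply: (@supported_in_fin _ _ (Num.min m 0) (a + bnd Y)) => e.
  by move=> /mulf_neq0_split [/mulf_neq0_split [_ /(ldeg_le_nz Yb) ?] /ppow_low ?]; lia.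
by apply: eq_fsum => b; rewrite addrC addKr mulrA.
Qed.

Lemma lsubstL_is_monoid_morphism : monoid_morphism lsubstL.
Proof.
split=> [|x y]; first by rewrite -(rmorph1 (@lpolyL K)) lsubstL_poly comp_polyC.
apply: laurent_ext => m.
rewrite [LHS]lsubstL_coefM [in RHS]lvalM [RHS]lmul_lsubstL; last exact: lvalP.
apply: eq_fsum => a; congr (_ * _).
rewrite (lmulC (lvalP _) (lvalP _)) [RHS]lmul_lsubstL; last exact: lvalP.
by apply: eq_fsum => b; rewrite lmul_ppow addrC.
Qed.

HB.instance Definition _ := GRing.isMonoidMorphism.Build (laurent K) (laurent K) lsubstL
  lsubstL_is_monoid_morphism.

End Substitution.

Section ContinuedFractions.
Variable K : fieldType.
Implicit Types (x y : laurent K) (A : nat -> {poly K}) (Q u v : {poly K}).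

Definition cf_laurent x A := exists T : nat -> laurent K, T 0%N = x /\
  forall n, polypart (lval (T n)) (A n) /\ T n.+1 * (T n - lpolyL (A n)) = 1.

Lemma is_cfP x A : is_cf (lval x) A <-> cf_laurent x A.
Proof.
split=> [[th [th0 thP]]|[T [T0 TP]]].
  have lth n : is_laurent (th n) by case: (thP n).
  exists (fun n => mkL (lth n)); split=> [|n]; first exact/val_inj.
  by case: (thP n) => _ An thS; split=> //; exact/val_inj.
exists (fun n => lval (T n)); split=> [|n /=]; first by rewrite /= T0.
by case: (TP n) => An /(congr1 (@lval K)) TS.
Qed.

Lemma cf_laurent_uniq x A B : cf_laurent x A -> cf_laurent x B -> A = B.
Proof.
move=> [T [T0 TP]] [S [S0 SP]].
have coef_eq n : T n = S n -> A n = B n.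
  move=> TSn; apply/polyP => i; case: (TP n) => <- _; case: (SP n) => <- _.
  by rewrite TSn.
suff TS n : T n = S n by apply: funext => n; exact/coef_eq/TS.
elim: n => [|n IH]; first by rewrite T0 S0.
have next (U : nat -> laurent K) C m :
    U m.+1 * (U m - lpolyL (C m)) = 1 -> U m.+1 = (U m - lpolyL (C m))^-1.
  by move=> /mulr1_eq <-; rewrite invrK.
case: (TP n) (SP n) => _ /next -> [_ /next ->].
by rewrite IH (coef_eq _ IH).
Qed.

Definition rational x := exists u v, v != 0 /\ lpolyL v * x = lpolyL u.

Lemma rationalP x : lrational (lval x) <-> rational x.
Proof.
split=> -[u [v [v_neq0 vx]]]; exists u, v; split=> //.
  by apply: val_inj; exact: vx.
exact (congr1 (@lval K) vx).
Qed.

Lemma ldeg_le_frac_part x Q : polypart (lval x) Q -> ldeg_le (lval (x - lpolyL Q)) (-1).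
Proof.
move=> xQ e e_gt; have [k ->] : exists k : nat, e = k%:Z by exists (absz e); lia.
by rewrite lvalB xQ /= lpoly_nat subrr.
Qed.

(* The new denominator [u - Q v] has smaller degree than [v] since [x - Q] has
   negative degree. *)
Lemma rational_cf_step x y Q u v : polypart (lval x) Q -> y * (x - lpolyL Q) = 1 ->
  v != 0 -> lpolyL v * x = lpolyL u ->
  exists2 v' : {poly K}, (size v' < size v)%N & v' != 0 /\ lpolyL v' * y = lpolyL v.
Proof.
move=> xQ yx v_neq0 vx; set s := x - lpolyL Q in yx *; set r := u - Q * v.
have rs : lpolyL r = lpolyL v * s by rewrite rmorphB rmorphM /= -vx /s; ring.
have size_r : (size r < size v)%N.
  have : (0 < size v)%N by rewrite size_poly_gt0.
  suff : (size r <= (size v).-1)%N by lia.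
  apply/leq_sizeP => j hj; rewrite -lpoly_nat -[lpoly r]/(lval (lpolyL r)) rs.
  by apply: (ldeg_le_lmul (ldeg_le_lpoly (Q := v)) (ldeg_le_frac_part xQ)); lia.
have s_neq0 : s != 0 by apply/eqP => s0; move/eqP: yx; rewrite s0 mulr0 eq_sym oner_eq0.
exists r => //; split.
  by rewrite -lpolyL_eq0 rs mulf_neq0 ?lpolyL_eq0.
by rewrite rs -mulrA [s * _]mulrC yx mulr1.
Qed.

Lemma cf_laurent_irrational x A : cf_laurent x A -> ~ rational x.
Proof.
move=> [T [T0 TP]] [u0 [v0 [v0_neq0 vx0]]].
suff descent n : exists u v,
    [/\ v != 0, (size v + n <= size v0)%N & lpolyL v * T n = lpolyL u].
  have [u [v [v_neq0 ]]] := descent (size v0); rewrite -size_poly_gt0 in v_neq0; lia.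
elim: n => [|n [u [v [v_neq0 size_v vx]]]]; first by exists u0, v0; rewrite addn0 T0.
case: (TP n) => An TS.
have [v' size_v' [v'_neq0 v'T]] := rational_cf_step An TS v_neq0 vx.
by exists v, v'; split=> //; lia.
Qed.

Definition lfloor x : {poly K} := \poly_(i < (absz (bnd (lval x))).+1) lval x i%:Z.

Lemma polypart_lfloor x : polypart (lval x) (lfloor x).
Proof.
move=> e; rewrite coef_poly; case: ltnP => // e_gt.
by apply: (ldeg_le_bnd (lvalP x)); lia.
Qed.

Fixpoint complete_quotient x (n : nat) : laurent K :=
  if n is n'.+1 then
    let x' := complete_quotient x n' in (x' - lpolyL (lfloor x'))^-1
  else x.

Lemma frac_part_neq0 x : ~ rational x -> x - lpolyL (lfloor x) != 0.
Proof.
move=> x_irr; apply/eqP => x_poly; apply: x_irr; exists (lfloor x), 1.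
by rewrite oner_neq0 rmorph1 mul1r; split=> //; apply/eqP; rewrite -subr_eq0 x_poly.
Qed.

Lemma complete_quotient_irrational x n : ~ rational x -> ~ rational (complete_quotient x n).
Proof.
move=> x_irr; elim: n => [//|n IH] /=; set s := _ - _.
have s_neq0 : s != 0 := frac_part_neq0 IH.
move=> [u [v [v_neq0 vx]]]; have u_neq0 : u != 0.
  by rewrite -lpolyL_eq0 -vx mulf_neq0 ?invr_eq0 ?lpolyL_eq0.
apply: IH; exists (v + u * lfloor (complete_quotient x n)), u; split=> //.
have us : lpolyL u * s = lpolyL v by rewrite -vx -mulrA mulVf ?mulr1.
by rewrite rmorphD rmorphM /= -us /s; ring.
Qed.

Lemma cf_laurent_exists x : ~ rational x ->
  cf_laurent x (fun n => lfloor (complete_quotient x n)).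
Proof.
move=> x_irr; exists (complete_quotient x); split=> // n; split; first exact: polypart_lfloor.
by rewrite /= mulVf //; exact/frac_part_neq0/complete_quotient_irrational.
Qed.

End ContinuedFractions.

Section SubstitutionContinuedFractions.
Variables (K : fieldType) (P : {poly K}).
Hypothesis P_gt1 : (1 < size P)%N.
Local Notation lsubstL := (lsubstL P_gt1).
Implicit Types (x : laurent K) (A : nat -> {poly K}).

(* Since [deg P >= 1], substitution keeps the fractional part of negative degree. *)
Lemma polypart_lsubstL x Q : polypart (lval x) Q -> polypart (lval (lsubstL x)) (Q \Po P).
Proof.
move=> xQ e; have -> : lsubstL x = lsubstL (lpolyL Q) + lsubstL (x - lpolyL Q).
  by rewrite -rmorphD addrC subrK.
rewrite lvalD lsubstL_poly lpolyLE lpoly_nat.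
by rewrite (ldeg_le_lsubstL P_gt1 (ldeg_le_frac_part xQ)) ?addr0 //; lia.
Qed.

Lemma cf_laurent_lsubstL x A : cf_laurent x A -> cf_laurent (lsubstL x) (fun n => A n \Po P).
Proof.
move=> [T [T0 TP]]; exists (lsubstL \o T); split=> [|n /=]; first by rewrite /= T0.
case: (TP n) => An TS; split; first exact: polypart_lsubstL.
by rewrite -lsubstL_poly -rmorphB -rmorphM TS rmorph1.
Qed.

Lemma lsubstL_irrational x : ~ rational x -> ~ rational (lsubstL x).
Proof. by move=> /cf_laurent_exists /cf_laurent_lsubstL /cf_laurent_irrational. Qed.

Lemma quadratic_irrational_lsubstL x :
  quadratic_irrational (lval x) -> quadratic_irrational (lval (lsubstL x)).
Proof.
move=> [_ x_irr [a [b [c [a_neq0 quad]]]]]; split=> //.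
  by move/rationalP; apply: lsubstL_irrational => /rationalP.
have quadL : lpolyL a * (x * x) + lpolyL b * x + lpolyL c = 0 by apply: laurent_ext.
exists (a \Po P), (b \Po P), (c \Po P); split; first by rewrite comp_poly_eq0.
move=> e; rewrite -[LHS]/(lval (lpolyL (a \Po P) * (lsubstL x * lsubstL x)
  + lpolyL (b \Po P) * lsubstL x + lpolyL (c \Po P)) e).
by rewrite -!lsubstL_poly -!rmorphM -!rmorphD quadL rmorph0.
Qed.

End SubstitutionContinuedFractions.

Section PeriodicSums.
Local Open Scope nat_scope.
Variables (f : nat -> nat) (N l : nat).
Hypothesis f_periodic : forall i, N <= i -> f (i + l) = f i.

Lemma sum_period_shift M : N <= M ->
  \sum_(M <= i < M + l) f i = \sum_(N <= i < N + l) f i.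
Proof.
elim: M => [|M IH]; first by rewrite leqn0 => /eqP ->.
rewrite leq_eqVlt => /orP[/eqP <- //|le_NM]; rewrite -IH //.
apply: (@addnI (f M)); rewrite -big_ltn; last by rewrite addSn ltnS leq_addr.
by rewrite addSn big_nat_recr ?leq_addr //= f_periodic // addnC.
Qed.

Lemma sum_periods M k : N <= M ->
  \sum_(M <= i < M + k * l) f i = k * \sum_(N <= i < N + l) f i.
Proof.
move=> le_NM; elim: k => [|k IH]; first by rewrite mul0n addn0 big_geq.
rewrite mulSn (addnC l) addnA (@big_cat_nat _ _ _ (M + k * l)) ?leq_addr //= IH.
by rewrite sum_period_shift ?(leq_trans le_NM) ?leq_addr // mulSn addnC.
Qed.

End PeriodicSums.

Lemma sum_period_indep (f : nat -> nat) N1 l1 N2 l2 :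
  (forall i, (N1 <= i)%N -> f (i + l1) = f i) ->
  (forall i, (N2 <= i)%N -> f (i + l2) = f i) ->
  (l2 * \sum_(N1 <= i < N1 + l1) f i = l1 * \sum_(N2 <= i < N2 + l2) f i)%N.
Proof.
move=> f1 f2; rewrite -(sum_periods f1 l2 (leq_addr N2 N1)).
by rewrite -(sum_periods f2 l1 (leq_addl N1 N2)) mulnC.
Qed.

Lemma divr_natMl {F : numFieldType} (a b c : nat) : (0 < a)%N ->
  ((a * b)%:R / (a * c)%:R : F) = b%:R / c%:R.
Proof. by move=> a_gt0; rewrite !natrM invfM mulrACA mulfV ?mul1r ?pnatr_eq0 -?lt0n. Qed.

Section EscapeRatios.
Variables (K : fieldType) (R : realType).
Implicit Types (A : nat -> {poly K}) (x : lseries K) (P : {poly K}).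

Lemma ratio_ge0 A N l n : 0 <= ratio R A N l n.
Proof. by rewrite /ratio divr_ge0. Qed.

Lemma ratio_mono A N l : {homo ratio R A N l : n n' / (n <= n')%N >-> n' <= n}.
Proof.
move=> n n' le_nn'; rewrite /ratio ler_wpM2r ?invr_ge0 // ler_nat.
by apply: leq_sum => i _; apply: leq_sub2l.
Qed.

Lemma ratio_indep A N1 l1 N2 l2 n :
  cf_periodic A N1 l1 -> cf_periodic A N2 l2 -> ratio R A N1 l1 n = ratio R A N2 l2 n.
Proof.
move=> AP1 AP2; have [[l1_gt0 _] [l2_gt0 _]] := (AP1, AP2).
have per (g : {poly K} -> nat) N l : cf_periodic A N l ->
    forall i, (N <= i)%N -> (g \o A) (i + l)%N = (g \o A) i.
  by move=> [_ AP] i /AP /= ->.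
rewrite /ratio -(divr_natMl _ _ l2_gt0) -[RHS](divr_natMl _ _ l1_gt0).
rewrite (sum_period_indep (per (fun Q => deg Q - n)%N _ _ AP1) (per _ _ _ AP2)).
by rewrite (sum_period_indep (per (@deg K) _ _ AP1) (per _ _ _ AP2)).
Qed.

(* Composing with [P] multiplies every degree by [d = deg P >= 1], and
   [d a - n >= d (a - n)]. *)
Lemma ratio_comp A P N l n : (1 < size P)%N ->
  ratio R A N l n <= ratio R (fun i => A i \Po P) N l n.
Proof.
move=> P_gt1; set d := (size P).-1; have d_gt0 : (0 < d)%N by rewrite /d; lia.
have deg_comp i : deg (A i \Po P) = (deg (A i) * d)%N by rewrite /deg size_comp_poly.
rewrite /ratio -(divr_natMl _ _ d_gt0).
have -> : (d * \sum_(N <= i < N + l) deg (A i))%N = \sum_(N <= i < N + l) deg (A i \Po P).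
  by rewrite big_distrr; apply: eq_bigr => i _; rewrite deg_comp mulnC.
rewrite ler_wpM2r ?invr_ge0 // ler_nat big_distrr /=; apply: leq_sum => i _.
by rewrite deg_comp mulnBr mulnC leq_sub2l // leq_pmull.
Qed.

Lemma is_cf_uniq x A B : is_cf x A -> is_cf x B -> A = B.
Proof.
move=> xA; have lx : is_laurent x by case: xA => th [<- thP]; case: (thP 0%N).
by move: xA; rewrite -[x]/(lval (mkL lx)) => /is_cfP xA /is_cfP /(cf_laurent_uniq xA).
Qed.

Lemma Rkn_eq x P k n A N l : is_cf (lmul x (lpoly (P ^+ k))) A -> cf_periodic A N l ->
  Rkn R x P k n = ratio R A N l n.
Proof.
move=> xA AP; apply: xget_unique; first by exists A, N, l.
by move=> r [B [N' [l' [/(is_cf_uniq xA) <- BP ->]]]]; exact: ratio_indep.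
Qed.

Variant Rkn_spec x P k : (nat -> R) -> Prop :=
| RknPeriodic A N l of is_cf (lmul x (lpoly (P ^+ k))) A & cf_periodic A N l :
    Rkn_spec x P k (ratio R A N l)
| RknJunk : Rkn_spec x P k (fun _ => 0).

Lemma RknP x P k : Rkn_spec x P k (Rkn R x P k).
Proof.
have [[A [N [l [xA AP]]]]|no_cf] :=
  pselect (exists A N l, is_cf (lmul x (lpoly (P ^+ k))) A /\ cf_periodic A N l).
  by rewrite (_ : Rkn R x P k = ratio R A N l); [constructor|apply/funext => n; exact: Rkn_eq].
rewrite (_ : Rkn R x P k = fun=> 0); first by constructor.
apply/funext => n; apply: xgetPN => r [A [N [l [xA AP _]]]].
by apply: no_cf; exists A, N, l.
Qed.

Lemma Rkn_ge0 x P k n : 0 <= Rkn R x P k n.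
Proof. by case: RknP => [A N l _ _|]; rewrite ?ratio_ge0. Qed.

Lemma Rkn_mono x P k : {homo Rkn R x P k : n n' / (n <= n')%N >-> n' <= n}.
Proof. by case: RknP => [A N l _ _|//]; exact: ratio_mono. Qed.

Lemma Rkn_lsubst x P k n : is_laurent x -> (1 < size P)%N ->
  Rkn R x 'X k n <= Rkn R (lsubst x P) P k n.
Proof.
move=> lx P_gt1; case: RknP => [A N l xA AP|]; last exact: Rkn_ge0.
set y := mkL lx * lpolyL ('X ^+ k).
have y_cf : is_cf (lmul (lsubst x P) (lpoly (P ^+ k))) (fun i => A i \Po P).
  have -> : lmul (lsubst x P) (lpoly (P ^+ k)) = lval (lsubstL P_gt1 y).
    rewrite -comp_Xn_poly -lpolyLE -lsubstL_poly.
    by rewrite -[lsubst x P]/(lval (lsubstL P_gt1 (mkL lx))) -lvalM -rmorphM.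
  exact/is_cfP/cf_laurent_lsubstL/is_cfP.
have AP' : cf_periodic (fun i => A i \Po P) N l by case: AP => l_gt0 AP; split=> // i /AP ->.
by rewrite (Rkn_eq _ y_cf AP') ratio_comp.
Qed.

End EscapeRatios.

Lemma le_limn_einf (R : realType) (u v : (\bar R)^nat) :
  (forall k, (u k <= v k)%E) -> (limn_einf u <= limn_einf v)%E.
Proof.
move=> uv; rewrite !limn_einf_lim; apply: lee_lim; try exact: is_cvg_einfs.
apply: nearW => n; apply: le_ereal_inf_tmp => _ [k k_ge <-].
by apply: ge_ereal_inf; exists (u k); [exists k|exact: uv].
Qed.

Theorem escape_of_mass_lsubst (K : fieldType) (R : realType) (c : R) (Theta : lseries K)
  (P : {poly K}) : (1 < size P)%N ->
  escape_of_mass Theta 'X c -> escape_of_mass (lsubst Theta P) P c.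
Proof.
move=> P_gt1 [quad_Theta escape_Theta].
have lT : is_laurent Theta by case: quad_Theta.
split; first exact: (quadratic_irrational_lsubstL P_gt1 (x := mkL lT)).
have liminf_nonincr (x : lseries K) Q :
    nonincreasing_seq (fun n => limn_einf (fun k => (Rkn R x Q k n)%:E)).
  by move=> n n' le_nn'; apply: le_limn_einf => k; rewrite lee_fin Rkn_mono.
apply: (le_trans escape_Theta).
apply: lee_lim; try exact/ereal_nonincreasing_is_cvgn/liminf_nonincr.
by apply: nearW => n; apply: le_limn_einf => k; rewrite lee_fin Rkn_lsubst.
Qed.

Theorem theorem1p19 (R : realType) (p : nat) (hp : prime p) (c : R)
  (hc0 : 0 <= c) (hc1 : c <= 1) (Theta : lseries 'F_p)
  (hT : escape_of_mass Theta 'X c)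
  (P : {poly 'F_p}) (hP : irreducible_poly P) :
  escape_of_mass (lsubst Theta P) P c.
Proof. by apply: escape_of_mass_lsubst hT; case: hP. Qed.
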